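(* Let $\underline{E}=(E_p)_{p\in\mathbb{P}}$ with $E_p\subseteq\overline{\mathbb{Z}_p}$ for each prime $p$. Then $$\mathrm{Pic}\big(\textnormal{Int}_{\mathbb{Q}}(\underline{E},\overline{\widehat{\mathbb{Z}}})\big)\cong\bigoplus_{p\in\mathbb{P}}\mathrm{Pic}\big(\textnormal{Int}_{\mathbb{Q}}(E_p,\overline{\mathbb{Z}_p})\big).$$
   Context: $\mathbb{P}$ is the set of primes; $\overline{\mathbb{Z}_p}$ is the integral closure of $\mathbb{Z}_p$ in a fixed algebraic closure of $\mathbb{Q}_p$. $\textnormal{Int}_{\mathbb{Q}}(E_p,\overline{\mathbb{Z}_p})=\{f\in\mathbb{Q}[X]\mid f(E_p)\subseteq\overline{\mathbb{Z}_p}\}$ and $\textnormal{Int}_{\mathbb{Q}}(\underline{E},\overline{\widehat{\mathbb{Z}}})=\bigcap_p\textnormal{Int}_{\mathbb{Q}}(E_p,\overline{\mathbb{Z}_p})$ (components may be empty). For an integral domain $D$, $\mathrm{Pic}(D)$ is the group of invertible fractional ideals modulo nonzero principal fractional ideals. *)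

From HB Require Import structures.
From mathcomp Require Import all_boot all_order all_algebra.
From mathcomp Require Import boolp.
Set Implicit Arguments. Unset Strict Implicit. Unset Printing Implicit Defensive.
Import Order.TTheory GRing.Theory Num.Theory.
Local Open Scope ring_scope.

Definition zp_base (p : nat) : nat := p.-2.+2.
Definition zp_mod (p n : nat) : int := ((zp_base p) ^ n)%N%:Z.
Definition zp_coh (p : nat) (x : nat -> int) : Prop :=
  forall n : nat, x n = modz (x n.+1) (zp_mod p n).
Definition Zpadic (p : nat) : Type := {x : nat -> int | zp_coh p x}.

HB.instance Definition _ (p : nat) := gen_eqMixin (Zpadic p).
HB.instance Definition _ (p : nat) := gen_choiceMixin (Zpadic p).

Lemma zp_modS (p n : nat) (a : int) :
  modz (modz a (zp_mod p n.+1)) (zp_mod p n) = modz a (zp_mod p n).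
Proof.
rewrite {2}(intdiv.divz_eq a (zp_mod p n.+1)) /zp_mod expnSr PoszM.
set q := intdiv.divz _ _; set B := Posz (_ ^ _); set b := Posz _.
have -> : q * (B * b) = (q * b) * B by rewrite mulrCA mulrC.
by rewrite modzMDl.
Qed.

Lemma zp_val_mod (p : nat) (x : Zpadic p) n : modz (sval x n) (zp_mod p n) = sval x n.
Proof. by rewrite {2}(proj2_sig x n) {1}(proj2_sig x n) modz_mod. Qed.

Lemma zp_eq (p : nat) (x y : Zpadic p) : (forall n, sval x n = sval y n) -> x = y.
Proof.
case: x => f Hf; case: y => g Hg /= H.
have efg : f = g by apply: funext.
subst g; congr exist; exact: Prop_irrelevance.
Qed.

Definition zp_zero (p : nat) : Zpadic p.
Proof. exists (fun _ => 0) => n; by rewrite mod0z. Defined.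

Definition zp_one (p : nat) : Zpadic p.
Proof. exists (fun n => modz 1 (zp_mod p n)) => n; by rewrite zp_modS. Defined.

Definition zp_add (p : nat) (x y : Zpadic p) : Zpadic p.
Proof.
exists (fun n => modz (sval x n + sval y n) (zp_mod p n)) => n.
by rewrite zp_modS (proj2_sig x n) (proj2_sig y n) modzDm.
Defined.

Definition zp_mul (p : nat) (x y : Zpadic p) : Zpadic p.
Proof.
exists (fun n => modz (sval x n * sval y n) (zp_mod p n)) => n.
by rewrite zp_modS (proj2_sig x n) (proj2_sig y n) modzMm.
Defined.

Definition zp_opp (p : nat) (x : Zpadic p) : Zpadic p.
Proof.
exists (fun n => modz (- sval x n) (zp_mod p n)) => n.
by rewrite zp_modS (proj2_sig x n) modzNm.
Defined.

Lemma zp_addA (p : nat) : associative (@zp_add p).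
Proof. by move=> x y z; apply: zp_eq => n /=; rewrite modzDml modzDmr addrA. Qed.
Lemma zp_addC (p : nat) : commutative (@zp_add p).
Proof. by move=> x y; apply: zp_eq => n /=; rewrite addrC. Qed.
Lemma zp_add0 (p : nat) : left_id (zp_zero p) (@zp_add p).
Proof. by move=> x; apply: zp_eq => n /=; rewrite add0r zp_val_mod. Qed.
Lemma zp_addN (p : nat) : left_inverse (zp_zero p) (@zp_opp p) (@zp_add p).
Proof. by move=> x; apply: zp_eq => n /=; rewrite modzDml addNr mod0z. Qed.

HB.instance Definition _ (p : nat) :=
  GRing.isZmodule.Build (Zpadic p) (@zp_addA p) (@zp_addC p) (@zp_add0 p) (@zp_addN p).

Lemma zp_mulA (p : nat) : associative (@zp_mul p).
Proof. by move=> x y z; apply: zp_eq => n /=; rewrite modzMml modzMmr mulrA. Qed.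
Lemma zp_mulC (p : nat) : commutative (@zp_mul p).
Proof. by move=> x y; apply: zp_eq => n /=; rewrite mulrC. Qed.
Lemma zp_mul1 (p : nat) : left_id (zp_one p) (@zp_mul p).
Proof. by move=> x; apply: zp_eq => n /=; rewrite modzMml mul1r zp_val_mod. Qed.
Lemma zp_mulD (p : nat) : left_distributive (@zp_mul p) +%R.
Proof.
move=> x y z; apply: zp_eq => n /=.
by rewrite modzMml mulrDl modzDm.
Qed.
Lemma zp_one_neq0 (p : nat) : zp_one p != 0.
Proof.
apply/eqP => H; have := f_equal (fun z : Zpadic p => sval z 1%N) H.
rewrite /= modz_small //= /zp_mod expn1 /zp_base.
Qed.

HB.instance Definition _ (p : nat) :=
  GRing.Zmodule_isComNzRing.Build (Zpadic p) (@zp_mulA p) (@zp_mulC p) (@zp_mul1 p)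
    (@zp_mulD p) (@zp_one_neq0 p).


Definition ideal_mul (F : fieldType) (I J : F -> Prop) : F -> Prop :=
  fun z => exists s : seq (F * F),
    (forall u, u \in s -> I u.1 /\ J u.2) /\ z = \sum_(u <- s) u.1 * u.2.

Definition ideal_scale (F : fieldType) (a : F) (J : F -> Prop) : F -> Prop :=
  fun z => exists y, J y /\ z = a * y.

Definition frac_ideal (F : fieldType) (D I : F -> Prop) : Prop :=
  [/\ I 0,
      (forall x y, I x -> I y -> I (x + y)),
      (forall a x, D a -> I x -> I (a * x)) &
      exists2 d, (d != 0) /\ D d & forall x, I x -> D (d * x)].

Definition invertible_ideal (F : fieldType) (D I : F -> Prop) : Prop :=
  frac_ideal D I /\
  exists J, frac_ideal D J /\ (forall z, ideal_mul I J z <-> D z).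

Definition ideal_equiv (F : fieldType) (I J : F -> Prop) : Prop :=
  exists2 a : F, a != 0 & forall z, I z <-> ideal_scale a J z.

Definition principal_ideal (F : fieldType) (D I : F -> Prop) : Prop :=
  ideal_equiv I D.

(* Since Pic is the group of invertible fractional
   ideals modulo principal ones, a group isomorphism
   Pic(D) -> \bigoplus_i Pic(Ds i) is the same as a map phi on invertible
   fractional ideals (representatives) such that
   - phi I is a family of invertible ideals, almost all principal,
   - the induced map on classes is well defined and injective (hphi_equiv),
   - it is multiplicative on classes (hphi_mul),
   - every finitely supported family of classes is attained (hphi_surj). *)
Definition Pic_iso_direct_sum (F : fieldType) (D : F -> Prop)
    (idx : nat -> Prop) (Ds : nat -> F -> Prop) : Prop :=
  exists phi : (F -> Prop) -> nat -> F -> Prop,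
  [/\ (forall I, invertible_ideal D I ->
         forall i, idx i -> invertible_ideal (Ds i) (phi I i)),
      (forall I, invertible_ideal D I ->
         exists N, forall i, idx i -> (N < i)%N -> principal_ideal (Ds i) (phi I i)),
      (forall I J, invertible_ideal D I -> invertible_ideal D J ->
         forall i, idx i ->
           ideal_equiv (phi (ideal_mul I J) i) (ideal_mul (phi I i) (phi J i))),
      (forall I J, invertible_ideal D I -> invertible_ideal D J ->
         (ideal_equiv I J <-> forall i, idx i -> ideal_equiv (phi I i) (phi J i))) &
      (forall Js : nat -> F -> Prop,
         (forall i, idx i -> invertible_ideal (Ds i) (Js i)) ->
         (exists N, forall i, idx i -> (N < i)%N -> principal_ideal (Ds i) (Js i)) ->
         exists2 I, invertible_ideal D I & forall i, idx i -> ideal_equiv (phi I i) (Js i))].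

(* K, with iota : Z_p -> K, is an algebraic closure of Q_p = Frac(Z_p):
   iota is injective, K is algebraically closed, and every element of K
   is algebraic over (the image of) Z_p, equivalently over Q_p. *)
Definition is_alg_closure_Qp (p : nat) (K : fieldType) (iota : {rmorphism Zpadic p -> K}) : Prop :=
  [/\ injective iota,
      GRing.closed_field_axiom K &
      forall a : K, exists q : {poly Zpadic p}, q != 0 /\ root (map_poly iota q) a].

Definition in_Zp_bar (p : nat) (K : fieldType) (iota : {rmorphism Zpadic p -> K}) (a : K) : Prop :=
  exists q : {poly Zpadic p}, q \is monic /\ root (map_poly iota q) a.

Definition IntQ_at (p : nat) (K : fieldType) (iota : {rmorphism Zpadic p -> K})
    (E : K -> Prop) (f : {poly rat}) : Prop :=
  forall a, E a -> in_Zp_bar iota (map_poly (@ratr K) f).[a].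

Definition IntQ_global (K : nat -> fieldType) (iota : forall p, {rmorphism Zpadic p -> K p})
    (E : forall p, K p -> Prop) (f : {poly rat}) : Prop :=
  forall p, prime p -> IntQ_at (iota p) (E p) f.

(* A subring of Q[X], viewed inside its fraction field Q(X). *)
Definition QX := {fraction {poly rat}}.
Definition in_QX (P : {poly rat} -> Prop) : QX -> Prop :=
  fun z => exists2 g, P g & z = tofrac g.

(* Write R_p for Int_Q(E_p, Zbar_p) and D for their intersection. Each R_p is a ring
   between Z_(p)[X] and Q[X], and localizing at p (inverting the integers prime to p)
   sends D to R_p; localization then induces the isomorphism.
   - Local-global principle: a D-module element that lies in every localization lies
     in the module, so an invertible ideal is determined by its localizations.
   - Injectivity: since Q[X] is a PID, an invertible ideal I has a "content" a with
     I Q[X] = a Q[X], and I R_p = a R_p for almost all p. If I R_p = a_p J R_p for all p,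
     then a_p a_J / a_I is a unit of Q[X], i.e. a rational constant c_p; taking the
     p-parts of the finitely many relevant c_p gives a single rational c with
     I = c (a_I / a_J) J.
   - Surjectivity: rescale each local representative so that it and its inverse
     contain a power of p; these are units at every other prime, so the intersection
     over all p of the rescaled representatives localizes to each of them. *)

From HB Require Import structures.
From mathcomp Require Import all_boot all_order all_algebra.
From mathcomp Require Import boolp ring.
Set Implicit Arguments. Unset Strict Implicit. Unset Printing Implicit Defensive.
Import Order.TTheory GRing.Theory Num.Theory.
Local Open Scope ring_scope.

Section PadicIntegers.
Variable p : nat.
Hypothesis p_prime : prime p.

Lemma zp_modE n : zp_mod p n = (p ^ n)%N%:Z.
Proof. by rewrite /zp_mod /zp_base; case: p p_prime => [|[|q]]. Qed.

Lemma zp_natE n k : sval (n%:R : Zpadic p) k = modz n%:Z (zp_mod p k).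
Proof.
elim: n => [|n IH]; first by rewrite mod0z.
rewrite mulrS -[sval _ k]/(modz (sval (1 : Zpadic p) k + sval (n%:R : Zpadic p) k) _).
by rewrite IH -[sval (1 : Zpadic p) k]/(modz 1 _) modzDm.
Qed.

Lemma zp_natr_eq0 n : ((n%:R : Zpadic p) == 0) = (n == 0)%N.
Proof.
apply/eqP/eqP => [|->]; last by rewrite mulr0n.
move/(congr1 (fun x : Zpadic p => sval x n)).
rewrite zp_natE -[sval (0 : Zpadic p) n]/0 zp_modE modz_nat modn_small => [[]//|].
by rewrite ltn_expl ?prime_gt1.
Qed.

Lemma zp_natr_unit n : p^'.-nat n -> exists u : Zpadic p, n%:R * u = 1.
Proof.
move=> /[dup] /andP [n_gt0 _]; rewrite p'natE // => pn.
have cop k : coprime n (p ^ k) by rewrite coprimeXr // coprime_sym prime_coprime.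
pose v k := ((egcdn n (p ^ k)).1 %% p ^ k)%N.
have vP k : (n * v k = 1 %[mod p ^ k])%N.
  rewrite /v; case: egcdnP => // km kn E _ /=.
  by rewrite modnMmr mulnC E (eqP (cop k)) modnMDl.
have v_coh : zp_coh p (fun k => (v k)%:Z).
  move=> k; rewrite zp_modE modz_nat; congr Posz.
  have vSk : (n * v k.+1 = 1 %[mod p ^ k])%N.
    by rewrite -(modn_dvdm _ (dvdn_exp2l p (leqnSn k))) vP modn_dvdm // dvdn_exp2l.
  rewrite -[in RHS](muln1 (v k.+1)) -modnMmr -(vP k) modnMmr mulnA (mulnC (v k.+1) n).
  by rewrite -modnMml vSk modnMml mul1n modn_mod.
pose u : Zpadic p := exist _ _ v_coh.
exists u; apply: zp_eq => k.
rewrite -[sval (n%:R * u) k]/(modz (sval (n%:R : Zpadic p) k * v k) _).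
rewrite -[sval (1 : Zpadic p) k]/(modz 1 _) zp_natE modzMml zp_modE -PoszM !modz_nat.
by rewrite vP.
Qed.

End PadicIntegers.

Definition int_poly (g : {poly rat}) := exists h : {poly int}, g = map_poly intr h.

Definition plocal_poly (p : nat) (g : {poly rat}) :=
  exists2 n : nat, p^'.-nat n & int_poly (n%:R *: g).

Section IntegralValuedPolynomials.
Variables (p : nat) (K : fieldType) (iota : {rmorphism Zpadic p -> K}).
Hypotheses (p_prime : prime p) (iota_inj : injective iota).

(* K has characteristic 0, as Z_p embeds into it, so [ratr] is a ring morphism. *)

Lemma natrK_eq0 n : ((n%:R : K) == 0) = (n == 0)%N.
Proof. by rewrite -(rmorph_nat iota) -(rmorph0 iota) (inj_eq iota_inj) zp_natr_eq0. Qed.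

Lemma intrK_eq0 (z : int) : ((z%:~R : K) == 0) = (z == 0).
Proof. by case: z => n; rewrite ?NegzE ?mulrNz ?oppr_eq0 -pmulrn natrK_eq0. Qed.

Lemma ratrK_frac (x : rat) (n d : int) :
  d != 0 -> x * d%:~R = n%:~R -> @ratr K x = n%:~R / d%:~R.
Proof.
move=> d_neq0 xd_n; have cross : numq x * d = n * denq x.
  apply: (@intr_inj rat); rewrite !rmorphM /= numqE -xd_n; ring.
apply/eqP; rewrite /ratr eqr_div ?intrK_eq0 ?denq_eq0 //.
by rewrite -!rmorphM /= cross.
Qed.

Fact ratrK_is_zmod_morphism : zmod_morphism (@ratr K).
Proof.
move=> x y; set dx := denq x; set dy := denq y.
have dx0 : dx != 0 := denq_neq0 x; have dy0 : dy != 0 := denq_neq0 y.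
have dK (z : rat) : ((denq z)%:~R : K) != 0 by rewrite intrK_eq0 denq_eq0.
rewrite (@ratrK_frac _ (numq x * dy - numq y * dx) (dx * dy)) ?mulf_neq0 //.
  by rewrite /ratr rmorphB !rmorphM /=; field; rewrite !dK.
by rewrite !rmorphM rmorphB !rmorphM /= !numqE; ring.
Qed.

Fact ratrK_is_monoid_morphism : monoid_morphism (@ratr K).
Proof.
split=> [|x y]; first by rewrite /ratr divr1.
have dK (z : rat) : ((denq z)%:~R : K) != 0 by rewrite intrK_eq0 denq_eq0.
rewrite (@ratrK_frac _ (numq x * numq y) (denq x * denq y)) ?mulf_neq0 ?denq_neq0 //.
  by rewrite /ratr !rmorphM /=; field; rewrite !dK.
by rewrite !rmorphM /= !numqE; ring.
Qed.

Definition ratrK : {rmorphism rat -> K} :=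
  HB.pack (@ratr K) (GRing.isZmodMorphism.Build rat K (@ratr K) ratrK_is_zmod_morphism)
                    (GRing.isMonoidMorphism.Build rat K (@ratr K) ratrK_is_monoid_morphism).

Lemma in_Zp_barE a : in_Zp_bar iota a <-> integralOver iota a.
Proof. by split=> [[q [m r]]|[q m r]]; exists q. Qed.

Variable E : K -> Prop.

Lemma IntQ_atD f g : IntQ_at iota E f -> IntQ_at iota E g -> IntQ_at iota E (f + g).
Proof.
move=> intf intg a Ea; apply/in_Zp_barE.
rewrite -[map_poly _ _]/(map_poly ratrK (f + g)) rmorphD hornerD.
by apply: integral_add; apply/in_Zp_barE; [exact: intf | exact: intg].
Qed.

Lemma IntQ_atM f g : IntQ_at iota E f -> IntQ_at iota E g -> IntQ_at iota E (f * g).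
Proof.
move=> intf intg a Ea; apply/in_Zp_barE.
rewrite -[map_poly _ _]/(map_poly ratrK (f * g)) rmorphM hornerM.
by apply: integral_mul; apply/in_Zp_barE; [exact: intf | exact: intg].
Qed.

Hypothesis E_integral : forall a, E a -> in_Zp_bar iota a.

Lemma IntQ_at_plocal f : plocal_poly p f -> IntQ_at iota E f.
Proof.
move=> [n pn [h nf_h]] a Ea; apply/in_Zp_barE.
have [u nu1] := zp_natr_unit p_prime pn.
have n_gt0 : (0 < n)%N by case/andP: pn.
have nK : (n%:R : K) != 0 by rewrite natrK_eq0 -lt0n.
have nQ : (n%:R : rat) != 0 by rewrite pnatr_eq0 -lt0n.
have iota_u : iota u = n%:R^-1.
  by apply: (mulfI nK); rewrite mulfV // -(rmorph_nat iota) -rmorphM nu1 rmorph1.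
have coef_f i : f`_i = n%:R^-1 * (h`_i)%:~R.
  by rewrite -coef_map_id0 // -nf_h coefZ mulKf.
apply: integral_horner; last by apply/in_Zp_barE; exact: E_integral.
apply/integral_poly => i; rewrite coef_map_id0; last by rewrite -[@ratr K 0]/(ratrK 0) rmorph0.
rewrite -[@ratr K _]/(ratrK _) coef_f rmorphM fmorphV rmorph_nat rmorph_int /=.
by rewrite -iota_u -(rmorph_int iota) -rmorphM; exact: integral_id.
Qed.

End IntegralValuedPolynomials.

Lemma pnat_gt0 pi n : pi.-nat n -> (0 < n)%N.
Proof. by case/andP. Qed.

Lemma natrQ_neq0 pi n : pi.-nat n -> (n%:R : rat) != 0.
Proof. by move/pnat_gt0; rewrite pnatr_eq0 -lt0n. Qed.

Lemma int_polyC (z : int) : int_poly (z%:~R)%:P.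
Proof. by exists z%:P; rewrite map_polyC. Qed.

Lemma int_polyN g : int_poly g -> int_poly (- g).
Proof. by move=> [h ->]; exists (- h); rewrite rmorphN. Qed.

Lemma int_poly_scale f : exists2 n : nat, (0 < n)%N & int_poly (n%:R *: f).
Proof.
have [h [[m|m] m_neq0 ->]] := rat_poly_scale f.
  exists m; first by rewrite lt0n.
  by rewrite scalerA mulfV ?scale1r; [exists h | rewrite pnatr_eq0].
exists m.+1 => //; rewrite scalerA NegzE mulrNz invrN mulrN mulfV ?pnatr_eq0 //.
by rewrite scaleN1r; apply: int_polyN; exists h.
Qed.

Lemma plocal_int_poly p g : prime p -> int_poly g -> plocal_poly p g.
Proof. by move=> p_pr g_int; exists 1%N; rewrite ?scale1r // p'natE ?dvdn1 ?gtn_eqF ?prime_gt1. Qed.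

Lemma plocal_poly_away p f : prime p ->
  exists2 e : nat, p^'.-nat e & forall q, prime q -> q != p -> plocal_poly q (e%:R *: f).
Proof.
move=> p_pr; have [n n_gt0 nf_int] := int_poly_scale f.
exists (n`_p^')%N; first exact: part_pnat.
move=> q q_pr q_neq_p; exists (n`_p)%N.
  by apply: (pi_pnat (part_pnat _ _)); rewrite !inE eq_sym.
by rewrite scalerA -natrM partnC.
Qed.

Definition almost_all_primes (P : nat -> Prop) :=
  exists N, forall p, prime p -> (N < p)%N -> P p.

Lemma almost_all_primesI P Q :
  almost_all_primes P -> almost_all_primes Q -> almost_all_primes (fun p => P p /\ Q p).
Proof.
move=> [N1 P_N1] [N2 Q_N2]; exists (maxn N1 N2) => p p_pr; rewrite gtn_max => /andP [lt1 lt2].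
by split; [apply: P_N1 | apply: Q_N2].
Qed.

Lemma almost_all_primes_seq (T : eqType) (s : seq T) (P : nat -> T -> Prop) :
  {in s, forall u, almost_all_primes (P^~ u)} ->
  almost_all_primes (fun p => {in s, forall u, P p u}).
Proof.
elim: s => [|u s IHs] Ps; first by exists 0%N.
have [|N P_N] := almost_all_primesI (Ps u (mem_head _ _)) (IHs _).
  by move=> v vs; apply: Ps; rewrite inE vs orbT.
exists N => p p_pr lt_Np v; have [Pu Ps'] := P_N p p_pr lt_Np.
by rewrite inE => /orP [/eqP -> | /Ps'].
Qed.

Lemma plocal_poly_ae f : almost_all_primes (plocal_poly ^~ f).
Proof.
have [n n_gt0 nf_int] := int_poly_scale f; exists n => p p_pr n_lt_p; exists n => //.
by rewrite p'natE //; apply: contraL n_lt_p => /(dvdn_leq n_gt0); rewrite leqNgt.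
Qed.

Definition p_unit (p : nat) (r : rat) := exists m n : nat,
  [/\ p^'.-nat m, p^'.-nat n & r = m%:R / n%:R \/ r = - (m%:R / n%:R)].

Definition ppart (p : nat) (r : rat) : rat := (`|numq r|`_p)%N%:R / (`|denq r|`_p)%N%:R.

Lemma p_unit_neq0 p r : p_unit p r -> r != 0.
Proof.
move=> [m [n [pm pn [->|->]]]];
  by rewrite ?oppr_eq0 mulf_neq0 ?invr_eq0 ?(natrQ_neq0 pm) ?(natrQ_neq0 pn).
Qed.

Lemma p_unitV p r : p_unit p r -> p_unit p r^-1.
Proof.
move=> [m [n [pm pn r_mn]]]; exists n, m; split => //.
by case: r_mn => ->; [left | right]; rewrite ?invrN invf_div.
Qed.

Lemma p_unitM p r s : p_unit p r -> p_unit p s -> p_unit p (r * s).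
Proof.
move=> [m [n [pm pn r_mn]]] [m' [n' [pm' pn' s_mn]]].
exists (m * m')%N, (n * n')%N; rewrite !pnatM pm pn pm' pn'; split => //.
rewrite !natrM -mulf_div.
by case: r_mn s_mn => -> [] ->; rewrite ?mulrN ?mulNr ?opprK; [left | right | right | left].
Qed.

Lemma p_unit1 p : p_unit p 1.
Proof. by exists 1%N, 1%N; split => //; left; rewrite divr1. Qed.

Lemma p_unit_ppart p q r : prime q -> p != q -> p_unit p (ppart q r).
Proof.
move=> q_pr p_neq_q; exists (`|numq r|`_q)%N, (`|denq r|`_q)%N.
by split; [| | left]; rewrite // (pi_pnat (part_pnat _ _)) // !inE eq_sym.
Qed.

Lemma ppart_neq0 q r : ppart q r != 0.
Proof. by rewrite mulf_neq0 ?invr_eq0 // pnatr_eq0 -lt0n part_gt0. Qed.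

Lemma p_unit_div_ppart p r : r != 0 -> p_unit p (r / ppart p r).
Proof.
move=> r_neq0; rewrite /ppart.
have num_gt0 : (0 < `|numq r|)%N by rewrite absz_gt0 numq_eq0.
have den_gt0 : (0 < `|denq r|)%N by rewrite absz_gt0 denq_eq0.
exists (`|numq r|`_p^')%N, (`|denq r|`_p^')%N; split; try exact: part_pnat.
have r_abs : r = (-1) ^+ (numq r < 0)%R * (`|numq r|%N%:R / `|denq r|%N%:R).
  rewrite -[r in LHS]divq_num_den {1}[numq r]intEsign rmorphM /= rmorph_sign -mulrA.
  by congr (_ * (_ / _)); rewrite pmulrn gez0_abs ?ltW ?denq_gt0.
have partK (n : nat) : (0 < n)%N -> (n%:R : rat) = (n`_p)%N%:R * (n`_p^')%N%:R.
  by move=> n_gt0; rewrite -natrM partnC.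
have pnz (n : nat) : ((n`_p)%N%:R : rat) != 0 by rewrite pnatr_eq0 -lt0n part_gt0.
have -> : r / ((`|numq r|`_p)%N%:R / (`|denq r|`_p)%N%:R) =
          (-1) ^+ (numq r < 0)%R * ((`|numq r|`_p^')%N%:R / (`|denq r|`_p^')%N%:R).
  rewrite {1}r_abs (partK `|numq r|%N) // (partK `|denq r|%N) //.
  by field; rewrite !pnz !(natrQ_neq0 (part_pnat _ _)).
by case: (numq r < 0)%R; [right | left]; rewrite ?expr1 ?expr0 ?mulN1r ?mul1r.
Qed.

Lemma p_unit_prod p (I : finType) (P : pred I) (F : I -> rat) :
  (forall i, P i -> p_unit p (F i)) -> p_unit p (\prod_(i | P i) F i).
Proof. by move=> F_unit; apply: big_ind => //; [apply: p_unit1 | apply: p_unitM]. Qed.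

Lemma p_unit_prod_ppart N (c : nat -> rat) p : prime p -> (N < p)%N ->
  p_unit p (\prod_(q < N.+1 | prime q) ppart q (c q)).
Proof.
move=> p_pr lt_Np; apply: p_unit_prod => q q_pr; apply: p_unit_ppart => //.
by rewrite neq_ltn (leq_trans (ltn_ord q)) ?orbT.
Qed.

Lemma p_unit_prod_ppart_div N (c : nat -> rat) p : prime p -> (p <= N)%N -> c p != 0 ->
  p_unit p ((\prod_(q < N.+1 | prime q) ppart q (c q)) / c p).
Proof.
move=> p_pr le_pN cp_neq0; rewrite (bigD1 (Ordinal (le_pN : (p < N.+1)%N))) //= mulrAC.
apply: p_unitM; last by apply: p_unit_prod => q /andP [q_pr /eqP q_neq_p];
  apply: p_unit_ppart => //; apply/eqP => p_q; apply: q_neq_p; apply: val_inj.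
by rewrite -invf_div; apply/p_unitV/p_unit_div_ppart.
Qed.

Section FractionalIdeals.
Variable F : fieldType.
Implicit Types (S I J M : F -> Prop) (x y z : F).

Definition is_subring S := [/\ S 0, S 1, (forall x y, S x -> S y -> S (x + y)),
  (forall x, S x -> S (- x)) & (forall x y, S x -> S y -> S (x * y))].

Definition is_module S M := [/\ M 0, (forall x y, M x -> M y -> M (x + y)) &
  (forall a x, S a -> M x -> M (a * x))].

Definition generates S (gens : seq F) I := {in gens, forall x, I x} /\
  forall M, is_module S M -> {in gens, forall x, M x} -> forall z, I z -> M z.

Lemma frac_ideal_module S I : frac_ideal S I -> is_module S I.
Proof. by case. Qed.

Section Modules.
Variable S : F -> Prop.
Hypothesis S_subring : is_subring S.

Lemma subring1 : S 1. Proof. by case: S_subring. Qed.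
Lemma subringD x y : S x -> S y -> S (x + y). Proof. by case: S_subring => _ _ + _ _; apply. Qed.

Lemma subring_module : is_module S S.
Proof. by case: S_subring. Qed.

Variable M : F -> Prop.
Hypothesis M_module : is_module S M.

Lemma module0 : M 0. Proof. by case: M_module. Qed.
Lemma moduleD x y : M x -> M y -> M (x + y). Proof. by case: M_module => _ + _; apply. Qed.
Lemma moduleM a x : S a -> M x -> M (a * x). Proof. by case: M_module => _ _; apply. Qed.

Lemma moduleN x : M x -> M (- x).
Proof. by rewrite -mulN1r; apply: moduleM; case: S_subring => _ S1 _ SN _; apply: SN. Qed.

Lemma moduleB x y : M x -> M y -> M (x - y).
Proof. by move=> Mx My; apply: moduleD => //; apply: moduleN. Qed.

Lemma module_natr n x : M x -> M (n%:R * x).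
Proof.
move=> Mx; apply: moduleM => //; elim: n => [|n IHn]; first by case: S_subring.
by rewrite mulrS; apply: subringD => //; apply: subring1.
Qed.

Lemma module_sum (T : eqType) (s : seq T) (f : T -> F) :
  {in s, forall u, M (f u)} -> M (\sum_(u <- s) f u).
Proof.
elim: s => [|a s IHs] Ms; first by rewrite big_nil; apply: module0.
rewrite big_cons; apply: moduleD; first by apply: Ms; rewrite inE eqxx.
by apply: IHs => u us; apply: Ms; rewrite inE us orbT.
Qed.

Lemma module_prod_natr (I : finType) (P : pred I) (G : I -> nat) i0 x :
  P i0 -> M ((G i0)%:R * x) -> M ((\prod_(i | P i) G i)%:R * x).
Proof.
by move=> P_i0 M_i0; rewrite (bigD1 i0) //= natrM mulrAC mulrC; apply: module_natr.
Qed.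

End Modules.

Lemma ideal_scale1 I z : ideal_scale 1 I z <-> I z.
Proof. by split=> [[y [Iy ->]] | Iz]; [rewrite mul1r | exists z; rewrite mul1r]. Qed.

Lemma ideal_mul_pair I J u v : I u -> J v -> ideal_mul I J (u * v).
Proof.
by move=> Iu Jv; exists [:: (u, v)]; split; [move=> w; rewrite inE => /eqP -> | rewrite big_seq1].
Qed.

Lemma ideal_mul_sum I J (T : eqType) (s : seq T) (f g : T -> F) :
  {in s, forall u, I (f u) /\ J (g u)} -> ideal_mul I J (\sum_(u <- s) f u * g u).
Proof.
move=> IJ_s; exists [seq (f u, g u) | u <- s]; split; last by rewrite big_map.
by move=> w /mapP [u us ->]; apply: IJ_s.
Qed.

Lemma ideal_mul_ind I J M : M 0 -> (forall x y, M x -> M y -> M (x + y)) ->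
  (forall u v, I u -> J v -> M (u * v)) -> forall z, ideal_mul I J z -> M z.
Proof.
move=> M0 MD MIJ z [s [IJ_s ->]]; elim: s IJ_s => [|a s IHs] IJ_s; first by rewrite big_nil.
rewrite big_cons; apply: MD; first by case: (IJ_s a (mem_head _ _)); apply: MIJ.
by apply: IHs => w ws; apply: IJ_s; rewrite inE ws orbT.
Qed.

Lemma ideal_mul_mono I I' J J' : (forall z, I z -> I' z) -> (forall z, J z -> J' z) ->
  forall z, ideal_mul I J z -> ideal_mul I' J' z.
Proof.
move=> II' JJ' z [s [IJ_s ->]]; exists s; split => // u us.
by case: (IJ_s u us) => Iu Ju; split; [apply: II' | apply: JJ'].
Qed.

Lemma ideal_mulD I J x y : ideal_mul I J x -> ideal_mul I J y -> ideal_mul I J (x + y).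
Proof.
move=> [s1 [IJ1 ->]] [s2 [IJ2 ->]]; exists (s1 ++ s2); split; last by rewrite big_cat.
by move=> u; rewrite mem_cat => /orP [/IJ1 | /IJ2].
Qed.

Lemma ideal_mul_module S I J : is_module S I -> is_module S (ideal_mul I J).
Proof.
move=> I_mod; split; [by exists [::]; rewrite big_nil | exact: ideal_mulD |].
move=> a x Sa [s [IJ_s ->]]; rewrite mulr_sumr.
rewrite (eq_bigr (fun u => (a * u.1) * u.2)) => [|u _]; last by rewrite mulrA.
by apply: ideal_mul_sum => u /IJ_s [Iu Ju]; split => //; apply: (moduleM I_mod).
Qed.

Lemma ideal_scale_module S a M : is_module S M -> is_module S (ideal_scale a M).
Proof.
move=> M_mod; split.
- by exists 0; rewrite mulr0; split => //; apply: module0 M_mod.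
- move=> _ _ [x [Mx ->]] [y [My ->]]; exists (x + y); rewrite mulrDr; split => //.
  exact: (moduleD M_mod).
- move=> b _ Sb [x [Mx ->]]; exists (b * x); rewrite mulrCA; split => //.
  exact: (moduleM M_mod).
Qed.

Lemma ideal_scaleK a I z : a != 0 -> ideal_scale a^-1 (ideal_scale a I) z <-> I z.
Proof.
move=> a_neq0; split => [[_ [[y [Iy ->]] ->]] | Iz]; first by rewrite mulKf.
by exists (a * z); split; [exists z | rewrite mulKf].
Qed.

Lemma ideal_equiv_sym I J : ideal_equiv I J -> ideal_equiv J I.
Proof.
move=> [a a_neq0 I_aJ]; exists a^-1; rewrite ?invr_eq0 // => z.
by rewrite -(ideal_scaleK J z a_neq0); split => -[y [Hy ->]]; exists y; split => //; apply/I_aJ.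
Qed.

Lemma ideal_mul_scale a b I J z :
  ideal_mul (ideal_scale a I) (ideal_scale b J) z <-> ideal_scale (a * b) (ideal_mul I J) z.
Proof.
split => [[s [IJ_s ->]] | [_ [[s [IJ_s ->]] ->]]]; last first.
  rewrite mulr_sumr (eq_bigr (fun u => (a * u.1) * (b * u.2))) => [|u _]; last by rewrite mulrACA.
  by apply: ideal_mul_sum => u /IJ_s [Iu Ju]; split; [exists u.1 | exists u.2].
elim: s IJ_s => [|u s IHs] IJ_s.
  by exists 0; rewrite big_nil mulr0; split => //; exists [::]; rewrite big_nil.
rewrite big_cons; have [[x [Ix ->]] [y [Jy ->]]] := IJ_s u (mem_head _ _).
have [w [IJw ->]] : ideal_scale (a * b) (ideal_mul I J) (\sum_(v <- s) v.1 * v.2).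
  by apply: IHs => v vs; apply: IJ_s; rewrite inE vs orbT.
exists (x * y + w); rewrite mulrDr mulrACA; split => //.
by apply: ideal_mulD => //; apply: ideal_mul_pair.
Qed.

Lemma ideal_mulC I J z : ideal_mul I J z <-> ideal_mul J I z.
Proof.
suff swap I' J' x : ideal_mul I' J' x -> ideal_mul J' I' x by split; apply: swap.
move=> [s [IJ_s ->]]; rewrite (eq_bigr (fun u => u.2 * u.1)) => [|u _]; last exact: mulrC.
by apply: ideal_mul_sum => u /IJ_s [].
Qed.

Section Invertible.
Variable S : F -> Prop.
Hypothesis S_subring : is_subring S.

Lemma inverse_colon I J : is_module S J -> (forall z, ideal_mul I J z <-> S z) ->
  forall y, J y <-> (forall x, I x -> S (y * x)).
Proof.
move=> J_mod IJ_S y; split=> [Jy x Ix | yI_S].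
  by apply/IJ_S; rewrite mulrC; apply: ideal_mul_pair.
have [s [IJ_s s1]] : ideal_mul I J 1 by apply/IJ_S; apply: subring1.
rewrite -[y]mulr1 s1 mulr_sumr; apply: (module_sum J_mod) => u /IJ_s [Iu Ju].
by rewrite mulrA; apply: (moduleM J_mod) => //; apply: yI_S.
Qed.

Lemma invertible_generated I : invertible_ideal S I -> exists gens, generates S gens I.
Proof.
move=> [_ [J [_ IJ_S]]]; have [s [IJ_s s1]] : ideal_mul I J 1 by apply/IJ_S; apply: subring1.
exists (map fst s); split => [_ /mapP [u /IJ_s [Iu _] ->] // | M M_mod M_gens z Iz].
rewrite -[z]mulr1 s1 mulr_sumr; apply: (module_sum M_mod) => u us; have [Iu Ju] := IJ_s u us.
rewrite mulrA mulrAC; apply: (moduleM M_mod); first by apply/IJ_S; apply: ideal_mul_pair.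
by apply: M_gens; apply/mapP; exists u.
Qed.

End Invertible.

End FractionalIdeals.

Definition constQX : {rmorphism rat -> QX} := (@tofrac {poly rat} \o polyC)%FUN.

Lemma natrQX_eq0 n : ((n%:R : QX) == 0) = (n == 0)%N.
Proof. by rewrite -(rmorph_nat constQX) fmorph_eq0 pnatr_eq0. Qed.

Lemma natrQX_neq0 pi n : pi.-nat n -> (n%:R : QX) != 0.
Proof. by move/pnat_gt0; rewrite natrQX_eq0 -lt0n. Qed.

Lemma tofracZ (c : rat) (g : {poly rat}) : tofrac (c *: g) = constQX c * tofrac g.
Proof. by rewrite -mul_polyC tofracM. Qed.

Lemma tofrac_natrZ n (g : {poly rat}) : tofrac (n%:R *: g) = n%:R * tofrac g.
Proof. by rewrite tofracZ rmorph_nat. Qed.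

Section PolynomialContent.
Implicit Types (S I : QX -> Prop) (a b x : QX).

Definition sub_polys S := forall z, S z -> exists g, z = tofrac g.

Definition poly_multiple a x := exists f : {poly rat}, x = a * tofrac f.

Inductive polyspan I : QX -> Prop :=
  | polyspan_gen x : I x -> polyspan I x
  | polyspan0 : polyspan I 0
  | polyspanD x y : polyspan I x -> polyspan I y -> polyspan I (x + y)
  | polyspanM (h : {poly rat}) x : polyspan I x -> polyspan I (tofrac h * x).

(* [a] generates I Q[X]; the finite generating family of I inside a Q[X] is kept
   because it yields bounds that are uniform in the prime. *)
Definition content_gen S I a := [/\ a != 0, polyspan I a &
  exists2 gens, generates S gens I & {in gens, forall x, poly_multiple a x}].

Lemma poly_multiple_module S a : sub_polys S -> is_module S (poly_multiple a).
Proof.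
move=> S_polys; split.
- by exists 0; rewrite mulr0.
- by move=> _ _ [f ->] [g ->]; exists (f + g); rewrite tofracD mulrDr.
- by move=> _ _ /S_polys [g ->] [f ->]; exists (g * f); rewrite tofracM mulrCA.
Qed.

Lemma polyspan_poly_multiple I a b :
  (forall z, I z -> poly_multiple b z) -> polyspan I a -> poly_multiple b a.
Proof.
move=> Ib; elim=> {a} [x /Ib // | | _ _ _ [f ->] _ [g ->] | h _ _ [f ->]].
- by exists 0; rewrite mulr0.
- by exists (f + g); rewrite tofracD mulrDr.
- by exists (h * f); rewrite tofracM mulrCA.
Qed.

Lemma content_gen_sub S I a : sub_polys S -> content_gen S I a ->
  forall z, I z -> poly_multiple a z.
Proof.
move=> S_polys [_ _ [gens [_ gens_span] gens_a]].
by apply: gens_span => //; apply: poly_multiple_module.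
Qed.

Lemma poly_multiple_const a b : a != 0 -> b != 0 ->
  poly_multiple a b -> poly_multiple b a -> exists2 c : rat, c != 0 & b = constQX c * a.
Proof.
move=> a_neq0 b_neq0 [f b_af] [g a_bg].
have fg1 : f * g = 1.
  apply/eqP; rewrite -tofrac_eq tofracM tofrac1; apply/eqP/(mulfI a_neq0).
  by rewrite mulr1 mulrA -b_af.
have f_unit : f \is a GRing.unit by apply/unitrP; exists g; rewrite mulrC fg1.
have f_const : f = (f`_0)%:P.
  by apply: size1_polyC; move: (f_unit); rewrite poly_unitE => /andP [/eqP ->].
exists f`_0; last by rewrite b_af {1}f_const mulrC.
by apply: contraTneq f_unit => f0; rewrite f_const f0 unitr0.
Qed.

Lemma polyspan_scale I a x : polyspan I x -> polyspan (ideal_scale a I) (a * x).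
Proof.
elim=> {x} [x Ix | | x y _ IHx _ IHy | h x _ IHx].
- by apply: polyspan_gen; exists x.
- by rewrite mulr0; apply: polyspan0.
- by rewrite mulrDr; apply: polyspanD.
- by rewrite mulrCA; apply: polyspanM.
Qed.

Lemma polyspan_mono I J a : (forall x, I x -> J x) -> polyspan I a -> polyspan J a.
Proof.
move=> IJ; elim=> {a} [x /IJ | | x y _ + _ | h x _]; last exact: polyspanM.
- exact: polyspan_gen.
- exact: polyspan0.
- exact: polyspanD.
Qed.

Lemma poly_multiple_trans a b x : poly_multiple a b -> poly_multiple b x -> poly_multiple a x.
Proof. by move=> [f ->] [g ->]; exists (f * g); rewrite tofracM mulrA. Qed.

Lemma poly_multiple_dvdp (g h : {poly rat}) d :
  g %| h -> poly_multiple (tofrac g / d) (tofrac h / d).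
Proof. by move=> /divpK h_eq; exists (h %/ g); rewrite -{1}h_eq tofracM; ring. Qed.

Lemma gcd_fractions (d : QX) (xs : seq QX) : d != 0 ->
  {in xs, forall x, exists f, d * x = tofrac f} ->
  exists g : {poly rat}, [/\ g = 0 -> {in xs, forall x, x = 0},
    {in xs, forall x, poly_multiple (tofrac g / d) x} &
    polyspan (fun x => x \in xs) (tofrac g / d)].
Proof.
move=> d_neq0; elim: xs => [|x xs IHxs] xs_polys.
  by exists 0; split => //; rewrite tofrac0 mul0r; apply: polyspan0.
have [f dx_f] := xs_polys x (mem_head _ _).
have [|g' [g'0 xs_g' span_g']] := IHxs; first by move=> y ys; apply: xs_polys; rewrite inE ys orbT.
have x_f : x = tofrac f / d by rewrite -dx_f mulrC mulKf.
have [[u v] /= gcd_uv] := Bezoutp f g'.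
exists (u * f + v * g'); split.
- move=> g0; move: gcd_uv; rewrite g0 eqp_sym eqp0 gcdp_eq0 => /andP [/eqP f0 /eqP /g'0 xs0].
  by move=> y; rewrite inE => /orP [/eqP -> | /xs0 //]; rewrite x_f f0 tofrac0 mul0r.
- move=> y; rewrite inE => /orP [/eqP -> | ys].
    by rewrite x_f; apply: poly_multiple_dvdp; rewrite (eqp_dvdl _ gcd_uv) dvdp_gcdl.
  apply: poly_multiple_trans (xs_g' y ys); apply: poly_multiple_dvdp.
  by rewrite (eqp_dvdl _ gcd_uv) dvdp_gcdr.
- have -> : tofrac (u * f + v * g') / d = tofrac u * x + tofrac v * (tofrac g' / d).
    by rewrite x_f tofracD !tofracM mulrDl !mulrA.
  apply: polyspanD; apply: polyspanM; first by apply: polyspan_gen; rewrite mem_head.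
  by apply: polyspan_mono span_g' => y ys; rewrite inE ys orbT.
Qed.

Lemma exists_content_gen S I : is_subring S -> sub_polys S -> invertible_ideal S I ->
  exists a, content_gen S I a.
Proof.
move=> S_subring S_polys I_inv; have [[_ _ _ [d [d_neq0 _] dI_S]] [J [_ IJ_S]]] := I_inv.
have [gens [gens_I gens_span]] := invertible_generated S_subring I_inv.
have [|g [g0 gens_g span_g]] := gcd_fractions d_neq0 (xs := gens).
  by move=> x /gens_I /dI_S /S_polys [f ->]; exists f.
exists (tofrac g / d); split; [| exact: polyspan_mono span_g | by exists gens].
apply: mulf_neq0; last by rewrite invr_eq0.
rewrite tofrac_eq0; apply/eqP => /g0 gens0.
have I0 z : I z -> z = 0.
  apply: (gens_span (fun z => z = 0)) => //.
  by split => [| x y -> -> | a x _ ->]; rewrite ?addr0 ?mulr0.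
have IJ1 : ideal_mul I J 1 by apply/IJ_S; apply: subring1.
have /eqP : (1 : QX) = 0.
  by apply: (ideal_mul_ind (M := fun z => z = 0)) IJ1 => [|x y -> ->|u v /I0 -> _];
    rewrite ?addr0 ?mul0r.
by rewrite oner_eq0.
Qed.

End PolynomialContent.

Section LocalGlobal.
Implicit Types (I J M N : QX -> Prop) (x y z : QX).

Variable R : nat -> QX -> Prop.
Hypothesis R_add : forall p, prime p -> forall x y, R p x -> R p y -> R p (x + y).
Hypothesis R_mul : forall p, prime p -> forall x y, R p x -> R p y -> R p (x * y).
Hypothesis R_polys : forall p, prime p -> sub_polys (R p).
Hypothesis R_plocal : forall p, prime p -> forall g, plocal_poly p g -> R p (tofrac g).
Variable D : QX -> Prop.
Hypothesis D_def : forall z, D z <-> forall p, prime p -> R p z.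

Lemma R_int_poly p g : prime p -> int_poly g -> R p (tofrac g).
Proof. by move=> p_pr g_int; apply/R_plocal/plocal_int_poly. Qed.

Lemma R_subring p : prime p -> is_subring (R p).
Proof.
move=> p_pr; have R_const (z : int) : R p z%:~R.
  by rewrite -(rmorph_int constQX); apply: R_int_poly => //; apply: int_polyC.
split; [exact: (R_const 0) | exact: (R_const 1) | exact: R_add | | exact: R_mul].
by move=> x Rx; rewrite -mulN1r; apply: R_mul => //; apply: (R_const (-1)).
Qed.

Lemma D_sub_R p z : prime p -> D z -> R p z.
Proof. by move=> p_pr /D_def; apply. Qed.

Lemma D_subring : is_subring D.
Proof.
split=> [||x y /D_def Dx /D_def Dy|x /D_def Dx|x y /D_def Dx /D_def Dy];
  apply/D_def => p p_pr; have [R0 R1 RD RN RM] := R_subring p_pr.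
- exact: R0.
- exact: R1.
- exact: RD (Dx p p_pr) (Dy p p_pr).
- exact: RN (Dx p p_pr).
- exact: RM (Dx p p_pr) (Dy p p_pr).
Qed.

Lemma D_polys : sub_polys D.
Proof. by move=> z /D_def Dz; apply: (R_polys (p := 2)) => //; apply: Dz. Qed.

Lemma R_natrV p n : prime p -> p^'.-nat n -> R p n%:R^-1.
Proof.
move=> p_pr pn; rewrite -(rmorph_nat constQX) -fmorphV; apply: R_plocal => //.
exists n => //; rewrite scale_polyC mulfV ?(natrQ_neq0 pn) //; exact: (int_polyC 1).
Qed.

Lemma R_natrM p n x : prime p -> R p x -> R p (n%:R * x).
Proof.
by move=> p_pr; apply: (module_natr (R_subring p_pr) (subring_module (R_subring p_pr)) n).
Qed.

Lemma R_denominator p z : prime p -> R p z -> exists2 e : nat, p^'.-nat e & D (e%:R * z).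
Proof.
move=> p_pr Rz; have [g z_g] := R_polys p_pr Rz.
have [e pe e_plocal] := plocal_poly_away g p_pr.
exists e => //; apply/D_def => q q_pr; have [-> | q_neq_p] := eqVneq q p; first exact: R_natrM.
by rewrite z_g -tofrac_natrZ; apply: R_plocal => //; apply: e_plocal.
Qed.

Definition localize p M x := exists2 n : nat, p^'.-nat n & M (n%:R * x).

Lemma localize_sub p M x : M x -> localize p M x.
Proof. by exists 1%N; rewrite ?mul1r. Qed.

Lemma localize_module p M : prime p -> is_module D M -> is_module (R p) (localize p M).
Proof.
move=> p_pr M_mod; split; first by apply: localize_sub; apply: module0 M_mod.
- move=> x y [n pn Mnx] [m pm Mmy]; exists (n * m)%N; first by rewrite pnatM pn.
  rewrite natrM (mulrC n%:R) mulrDr -!mulrA [in X in _ + X]mulrCA.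
  by apply: (moduleD M_mod); apply: (module_natr D_subring M_mod).
- move=> a x Ra [n pn Mnx]; have [e pe De] := R_denominator p_pr Ra.
  exists (e * n)%N; first by rewrite pnatM pe.
  rewrite natrM mulrACA; exact: (moduleM M_mod).
Qed.

Lemma localize_min p M N x : prime p -> is_module (R p) N -> (forall z, M z -> N z) ->
  localize p M x -> N x.
Proof.
move=> p_pr N_mod MN [n pn Mnx]; rewrite -[x](mulKf (natrQX_neq0 pn)).
by apply: (moduleM N_mod); [apply: R_natrV | apply: MN].
Qed.

Lemma localize_D p x : prime p -> localize p D x <-> R p x.
Proof.
move=> p_pr; split; last by move=> /(R_denominator p_pr) [e pe De]; exists e.
by apply: localize_min => //; [apply: subring_module; apply: R_subring | move=> z; apply: D_sub_R].
Qed.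

Lemma localize_scale p a M x : localize p (ideal_scale a M) x <-> ideal_scale a (localize p M) x.
Proof.
split => [[n pn [y [My nx_ay]]] | [y [[n pn Mny] ->]]].
  exists (n%:R^-1 * y); split; first by exists n => //; rewrite mulVKf ?(natrQX_neq0 pn).
  by rewrite mulrCA -nx_ay mulKf ?(natrQX_neq0 pn).
by exists n => //; exists (n%:R * y); rewrite mulrCA.
Qed.

Lemma local_global M x : is_module D M -> (forall p, prime p -> localize p M x) -> M x.
Proof.
move=> M_mod x_loc.
(* Shrink n to gcd(n, m), with m prime to the least prime factor of n. *)
suff multiple_M n : (0 < n)%N -> M (n%:R * x) -> M x.
  by have [n /pnat_gt0 n_gt0 Mnx] := x_loc 2%N isT; apply: multiple_M n_gt0 Mnx.
elim/ltn_ind: n => n IHn n_gt0 Mnx.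
have [n_le1 | n_gt1] := leqP n 1.
  by move: Mnx; rewrite (@anti_leq n 1) ?n_le1 // mul1r.
have [m qm Mmx] := x_loc _ (pdiv_prime n_gt1).
have [km kn bezout _] := egcdnP m n_gt0.
have g_gt0 : (0 < gcdn n m)%N by rewrite gcdn_gt0 n_gt0.
apply: (IHn (gcdn n m)) => //.
  rewrite ltn_neqAle dvdn_leq ?dvdn_gcdl // andbT.
  move: qm; rewrite p'natE ?pdiv_prime // => /negP qm.
  by apply/eqP => g_n; apply: qm; rewrite (dvdn_trans (pdiv_dvd n)) // -g_n dvdn_gcdr.
have -> : (gcdn n m)%:R * x = km%:R * (n%:R * x) - kn%:R * (m%:R * x).
  by apply/eqP; rewrite eq_sym subr_eq !mulrA -!natrM bezout natrD mulrDl addrC.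
by apply: (moduleB D_subring M_mod); apply: (module_natr D_subring M_mod).
Qed.

Lemma localize_mul p M N : prime p -> is_module D M -> is_module D N ->
  forall z, ideal_mul (localize p M) (localize p N) z <-> localize p (ideal_mul M N) z.
Proof.
move=> p_pr M_mod N_mod z; have MN_loc := localize_module p_pr (ideal_mul_module N M_mod).
split; first apply: ideal_mul_ind.
- exact: module0 MN_loc.
- exact: moduleD MN_loc.
- move=> u v [n pn Mnu] [m pm Nmv]; exists (n * m)%N; first by rewrite pnatM pn.
  by rewrite natrM mulrACA; apply: ideal_mul_pair.
apply: localize_min => //; first exact: ideal_mul_module (localize_module p_pr M_mod).
by apply: ideal_mul_mono => w; apply: localize_sub.
Qed.

Lemma localize_frac p M : prime p -> frac_ideal D M -> frac_ideal (R p) (localize p M).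
Proof.
move=> p_pr M_frac; have [_ _ _ [d [d_neq0 Dd] dM_D]] := M_frac.
have [loc0 locD locM] := localize_module p_pr (frac_ideal_module M_frac).
split => //; exists d; first by split; last exact: D_sub_R.
have [R0 _ RD _ RM] := R_subring p_pr.
move=> x; apply: (localize_min (N := fun w => R p (d * w))) => // [|z /dM_D]; last exact: D_sub_R.
by split=> [|u v|a u]; rewrite ?mulr0 ?mulrDr 1?mulrCA; [apply: R0 | apply: RD | apply: RM].
Qed.

Lemma localize_invertible p I : prime p -> invertible_ideal D I ->
  invertible_ideal (R p) (localize p I).
Proof.
move=> p_pr [I_frac [J [J_frac /predeqP IJ_D]]]; split; first exact: localize_frac.
have I_mod := frac_ideal_module I_frac; have J_mod := frac_ideal_module J_frac.
exists (localize p J); split=> [|z]; first exact: localize_frac.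
by rewrite localize_mul // [ideal_mul I J]IJ_D localize_D.
Qed.

Lemma localize_mul_equiv p I J : prime p -> invertible_ideal D I -> invertible_ideal D J ->
  ideal_equiv (localize p (ideal_mul I J)) (ideal_mul (localize p I) (localize p J)).
Proof.
move=> p_pr [/frac_ideal_module I_mod _] [/frac_ideal_module J_mod _].
exists 1 => [|z]; first exact: oner_neq0.
split=> [IJz | [y [/(localize_mul p_pr I_mod J_mod) IJy ->]]]; last by rewrite mul1r.
by exists z; rewrite mul1r; split => //; apply/localize_mul.
Qed.

Lemma localize_equiv p I J : ideal_equiv I J -> ideal_equiv (localize p I) (localize p J).
Proof.
move=> [a a_neq0 /predeqP I_aJ]; exists a => // z.
by rewrite -localize_scale I_aJ.
Qed.

Lemma R_module_D p M : prime p -> is_module (R p) M -> is_module D M.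
Proof. by move=> p_pr [M0 MD MM]; split=> // a x /(D_sub_R p_pr); apply: MM. Qed.

Lemma localize_principal_ae I a : invertible_ideal D I -> content_gen D I a ->
  almost_all_primes (fun p => forall z, localize p I z <-> ideal_scale a (R p) z).
Proof.
move=> [I_frac _] [_ span_a [gens [_ gens_span] gens_a]].
have I_mod := frac_ideal_module I_frac.
have a_ae : almost_all_primes (fun p => localize p I a).
  elim: span_a {gens_a} => {a} [x Ix | | x y _ x_ae _ y_ae | h x _ x_ae].
  - by exists 0%N => p _ _; apply: localize_sub.
  - by exists 0%N => p _ _; apply/localize_sub/(module0 I_mod).
  - have [N xy_ae] := almost_all_primesI x_ae y_ae; exists N => p p_pr lt_Np.
    have [x_loc y_loc] := xy_ae p p_pr lt_Np.
    exact: (moduleD (localize_module p_pr I_mod) x_loc y_loc).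
  - have [N hx_ae] := almost_all_primesI (plocal_poly_ae h) x_ae; exists N => p p_pr lt_Np.
    have [h_loc x_loc] := hx_ae p p_pr lt_Np.
    by apply: (moduleM (localize_module p_pr I_mod)) x_loc; apply: R_plocal.
have gens_ae : almost_all_primes (fun p => {in gens, forall x, ideal_scale a (R p) x}).
  apply: almost_all_primes_seq => x /gens_a [f ->].
  have [N f_ae] := plocal_poly_ae f; exists N => p p_pr lt_Np.
  by exists (tofrac f); split => //; apply/R_plocal/f_ae.
have [N ae] := almost_all_primesI gens_ae a_ae; exists N => p p_pr lt_Np z.
have [gens_p a_p] := ae p p_pr lt_Np.
have aR_mod := ideal_scale_module a (subring_module (R_subring p_pr)).
split; first by apply: localize_min => // w; apply: gens_span => //; apply: R_module_D aR_mod.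
by move=> [y [Ry ->]]; rewrite mulrC; apply: (moduleM (localize_module p_pr I_mod)).
Qed.

Lemma local_ratio_const p I J aI aJ a : prime p ->
  invertible_ideal D I -> invertible_ideal D J -> content_gen D I aI -> content_gen D J aJ ->
  a != 0 -> (forall z, localize p I z <-> ideal_scale a (localize p J) z) ->
  exists2 c : rat, c != 0 & a = constQX c * (aI / aJ).
Proof.
move=> p_pr [I_frac _] [J_frac _] I_aI J_aJ a_neq0 I_aJ.
have [[aI_neq0 span_aI _] [aJ_neq0 span_aJ _]] := (I_aI, J_aJ).
have Rp_polys := R_polys p_pr.
have locI_aI z : localize p I z -> poly_multiple aI z.
  by apply: localize_min => //; [apply: poly_multiple_module | apply: content_gen_sub D_polys I_aI].
have locJ_aJ z : localize p J z -> poly_multiple aJ z.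
  by apply: localize_min => //; [apply: poly_multiple_module | apply: content_gen_sub D_polys J_aJ].
have aI_aaJ : poly_multiple aI (a * aJ).
  apply: polyspan_poly_multiple (polyspan_scale a span_aJ) => _ [y [Jy ->]].
  by apply/locI_aI/I_aJ; exists y; split => //; apply: localize_sub.
have aaJ_aI : poly_multiple (a * aJ) aI.
  apply: polyspan_poly_multiple span_aI => z /localize_sub /I_aJ [y [/locJ_aJ [f ->] ->]].
  by exists f; rewrite mulrA.
have [c c_neq0 aaJ_c] := poly_multiple_const aI_neq0 (mulf_neq0 a_neq0 aJ_neq0) aI_aaJ aaJ_aI.
by exists c; rewrite // mulrA -aaJ_c mulfK.
Qed.

Lemma R_constQX p r : prime p -> p_unit p r -> R p (constQX r).
Proof.
move=> p_pr [m [n [pm pn r_mn]]]; apply: R_plocal => //; exists n => //.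
rewrite scale_polyC; case: r_mn => ->; rewrite ?mulrN mulrCA mulfV ?(natrQ_neq0 pn) // mulr1.
  exact: (int_polyC m).
by rewrite polyCN; apply: int_polyN; exact: (int_polyC m).
Qed.

Lemma localize_scale_unit p I J a r : prime p -> p_unit p r -> is_module D J ->
  (forall z, localize p I z <-> ideal_scale a (localize p J) z) ->
  forall z, localize p I z <-> ideal_scale (constQX r * a) (localize p J) z.
Proof.
move=> p_pr r_unit J_mod I_aJ z; have J_loc := localize_module p_pr J_mod.
have u_neq0 : constQX r != 0 by rewrite fmorph_eq0 (p_unit_neq0 r_unit).
rewrite I_aJ; split=> [[y [Jy ->]] | [y [Jy ->]]].
  exists ((constQX r)^-1 * y); rewrite mulrACA mulfV // mul1r; split => //.
  by apply: (moduleM J_loc) => //; rewrite -fmorphV; apply/R_constQX/p_unitV.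
exists (constQX r * y); rewrite mulrCA mulrA; split => //.
by apply: (moduleM J_loc) => //; apply: R_constQX.
Qed.

Lemma equiv_of_local_scale I J a : is_module D I -> is_module D J ->
  (forall p, prime p -> forall z, localize p I z <-> ideal_scale a (localize p J) z) ->
  forall z, I z <-> ideal_scale a J z.
Proof.
move=> I_mod J_mod I_aJ z; split=> [Iz | [y [Jy ->]]].
  apply: local_global (ideal_scale_module a J_mod) _ => p p_pr.
  by apply/localize_scale/I_aJ => //; apply: localize_sub.
apply: local_global I_mod _ => p p_pr; apply/I_aJ => //.
by exists y; split => //; apply: localize_sub.
Qed.

Lemma localize_ratio_ae I J aI aJ : invertible_ideal D I -> invertible_ideal D J ->
  content_gen D I aI -> content_gen D J aJ ->
  almost_all_primes (fun p => forall z, localize p I z <-> ideal_scale (aI / aJ) (localize p J) z).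
Proof.
move=> I_inv J_inv I_aI J_aJ; have [aJ_neq0 _ _] := J_aJ.
have [N IJ_ae] := almost_all_primesI (localize_principal_ae I_inv I_aI)
                                     (localize_principal_ae J_inv J_aJ).
exists N => p p_pr lt_Np z; have [-> J_p] := IJ_ae p p_pr lt_Np.
split=> [[y [Ry ->]] | [_ [/J_p [y [Ry ->]] ->]]]; last by exists y; rewrite mulrA divfK.
by exists (aJ * y); rewrite mulrA divfK //; split => //; apply/J_p; exists y.
Qed.

Lemma equiv_of_local_equiv I J : invertible_ideal D I -> invertible_ideal D J ->
  (forall p, prime p -> ideal_equiv (localize p I) (localize p J)) -> ideal_equiv I J.
Proof.
move=> I_inv J_inv loc_equiv.
have I_mod := frac_ideal_module I_inv.1; have J_mod := frac_ideal_module J_inv.1.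
have [aI I_aI] := exists_content_gen D_subring D_polys I_inv.
have [aJ J_aJ] := exists_content_gen D_subring D_polys J_inv.
have [[aI_neq0 _ _] [aJ_neq0 _ _]] := (I_aI, J_aJ).
have c_ex p : exists c : rat, prime p -> c != 0 /\
    forall z, localize p I z <-> ideal_scale (constQX c * (aI / aJ)) (localize p J) z.
  have [p_pr | _] := boolP (prime p); last by exists 0.
  have [a a_neq0 I_aJ] := loc_equiv p p_pr.
  have [cp cp_neq0 a_cp] := local_ratio_const p_pr I_inv J_inv I_aI J_aJ a_neq0 I_aJ.
  by exists cp => _; rewrite -a_cp.
have [c c_spec] := choice c_ex.
have [N ratio_ae] := localize_ratio_ae I_inv J_inv I_aI J_aJ.
pose P := \prod_(q < N.+1 | prime q) ppart q (c q).
exists (constQX P * (aI / aJ)).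
  apply: mulf_neq0; last by apply: mulf_neq0; rewrite ?invr_eq0.
  by rewrite fmorph_eq0; apply/prodf_neq0 => q _; apply: ppart_neq0.
apply: equiv_of_local_scale => // p p_pr.
have [le_pN | lt_Np] := leqP p N; last first.
  by apply: localize_scale_unit => //; [apply: p_unit_prod_ppart | apply: ratio_ae].
have [cp_neq0 I_cJ] := c_spec p p_pr.
rewrite -[P](divfK cp_neq0) rmorphM -mulrA.
by apply: localize_scale_unit => //; apply: p_unit_prod_ppart_div.
Qed.

(* N and L contain powers of p, which are units at every other prime: this is what
   makes [bigcap_primes] glue such representatives. *)
Definition normal_pair p N L := [/\ is_module (R p) N, is_module (R p) L,
  (forall z, ideal_mul N L z <-> R p z), exists k, N (p ^ k)%N%:R & exists k, L (p ^ k)%N%:R].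

Lemma normal_pairC p N L : normal_pair p N L -> normal_pair p L N.
Proof. by move=> [N_mod L_mod NL_R N_k L_k]; split=> // z; rewrite ideal_mulC. Qed.

Lemma normal_pair_R p : prime p -> normal_pair p (R p) (R p).
Proof.
move=> p_pr; have [R0 R1 RD _ RM] := R_subring p_pr.
have R_mod := subring_module (R_subring p_pr).
split=> //; [move=> z | by exists 0%N | by exists 0%N].
split; first exact: ideal_mul_ind.
by move=> Rz; rewrite -[z]mulr1; apply: ideal_mul_pair.
Qed.

Lemma module_p_power p M e : prime p -> is_module (R p) M -> (0 < e)%N -> M e%:R ->
  exists k, M (p ^ k)%N%:R.
Proof.
move=> p_pr M_mod e_gt0 Me; exists (logn p e).
have pe' : p^'.-nat (e`_p^')%N by apply: part_pnat.
rewrite -p_part -[_%:R](mulKf (natrQX_neq0 pe')) -natrM mulnC partnC //.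
by apply: (moduleM M_mod) => //; apply: R_natrV.
Qed.

Lemma polyspan_natr_multiple p J x : prime p -> is_module (R p) J -> polyspan J x ->
  exists2 e : nat, (0 < e)%N & J (e%:R * x).
Proof.
move=> p_pr J_mod; elim=> {x} [x Jx | | x y _ [m m_gt0 Jmx] _ [n n_gt0 Jny] | h x _ [n n_gt0 Jnx]].
- by exists 1%N; rewrite ?mul1r.
- by exists 1%N; rewrite ?mulr0 //; apply: module0 J_mod.
- exists (m * n)%N; first by rewrite muln_gt0 m_gt0.
  have -> : (m * n)%:R * (x + y) = n%:R * (m%:R * x) + m%:R * (n%:R * y) by rewrite natrM; ring.
  by apply: (moduleD J_mod); apply: (module_natr (R_subring p_pr) J_mod).
- have [m m_gt0 mh_int] := int_poly_scale h; exists (m * n)%N; first by rewrite muln_gt0 m_gt0.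
  rewrite natrM mulrACA -tofrac_natrZ.
  by apply: (moduleM J_mod) => //; apply: R_int_poly.
Qed.

Lemma R_common_denominator p (xs : seq QX) : prime p -> {in xs, forall x, exists f, x = tofrac f} ->
  exists2 e : nat, (0 < e)%N & {in xs, forall x, R p (e%:R * x)}.
Proof.
move=> p_pr; elim: xs => [|x xs IHxs] xs_polys; first by exists 1%N.
have [f x_f] := xs_polys x (mem_head _ _).
have [|e e_gt0 e_xs] := IHxs; first by move=> y ys; apply: xs_polys; rewrite inE ys orbT.
have [m m_gt0 mf_int] := int_poly_scale f.
exists (m * e)%N => [|y]; first by rewrite muln_gt0 m_gt0.
rewrite inE => /orP [/eqP -> | ys]; last by rewrite natrM -mulrA; apply: R_natrM => //; apply: e_xs.
by rewrite x_f mulnC natrM -mulrA -tofrac_natrZ; apply: R_natrM => //; apply: R_int_poly.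
Qed.

Lemma normal_form p J : prime p -> invertible_ideal (R p) J ->
  exists N L, ideal_equiv J N /\ normal_pair p N L.
Proof.
move=> p_pr J_inv; have R_sub := R_subring p_pr; have R_mod := subring_module R_sub.
have [a [a_neq0 span_a [gens [_ gens_span] gens_a]]] :=
  exists_content_gen R_sub (R_polys p_pr) J_inv.
have [J_frac [K [K_frac JK_R]]] := J_inv.
have J_mod := frac_ideal_module J_frac; have K_mod := frac_ideal_module K_frac.
exists (ideal_scale a^-1 J), (ideal_scale a K); split.
  by exists a => // z; rewrite -(ideal_scaleK J z (invr_neq0 a_neq0)) invrK.
split; [exact: ideal_scale_module | exact: ideal_scale_module | | |].
- by move=> z; rewrite ideal_mul_scale mulVf // ideal_scale1.
- have [e e_gt0 J_ea] := polyspan_natr_multiple p_pr J_mod span_a.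
  apply: module_p_power e_gt0 _ => //; first exact: ideal_scale_module.
  by exists (e%:R * a); split => //; rewrite mulrCA mulVf ?mulr1.
- have [|e e_gt0 gens_e] := R_common_denominator p_pr (xs := [seq x / a | x <- gens]).
    by move=> _ /mapP [x /gens_a [f ->] ->]; exists f; rewrite mulrC mulKf.
  apply: module_p_power e_gt0 _ => //; first exact: ideal_scale_module.
  exists (e%:R / a); split; last by rewrite mulrCA mulfV ?mulr1.
  apply/(inverse_colon R_sub K_mod JK_R); apply: gens_span.
    split=> [|x y|b x Rb]; first by rewrite mulr0; apply: (module0 R_mod).
      by rewrite mulrDr; apply: (moduleD R_mod).
    by rewrite mulrCA; apply: (moduleM R_mod).
  by move=> x xg; rewrite mulrAC -mulrA; apply: gens_e; apply/mapP; exists x.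
Qed.

Definition bigcap_primes (N : nat -> QX -> Prop) z := forall q, prime q -> N q z.

Section Gluing.
Variables N L : nat -> QX -> Prop.
Hypothesis NL_normal : forall p, prime p -> normal_pair p (N p) (L p).
Hypothesis N_ae : almost_all_primes (fun p => N p = R p).

Lemma localize_bigcap p : prime p -> localize p (bigcap_primes N) = N p.
Proof.
move=> p_pr; apply/predeqP => z; have [N_mod _ NL_R _ [k' L_k']] := NL_normal p_pr.
split; first by apply: localize_min => // w; apply.
move=> Nz; have [N0 N_R] := N_ae.
have [g z_g] : exists g, z = tofrac g.
  have /(R_polys p_pr) [h pz_h] : R p ((p ^ k')%N%:R * z).
    by apply/NL_R; rewrite mulrC; apply: ideal_mul_pair.
  exists ((p ^ k')%N%:R^-1 *: h); rewrite tofracZ fmorphV rmorph_nat -pz_h mulKf //.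
  by apply: (natrQX_neq0 (pi := p)); rewrite pnatX pnat_id.
have [e pe e_loc] := plocal_poly_away g p_pr.
have Rez q : prime q -> q != p -> R q (e%:R * z).
  by move=> q_pr q_neq_p; rewrite z_g -tofrac_natrZ; apply/R_plocal/e_loc.
have k_ex q : exists k, prime q -> N q (q ^ k)%N%:R.
  have [q_pr | _] := boolP (prime q); last by exists 0%N.
  by have [_ _ _ [kq N_kq] _] := NL_normal q_pr; exists kq.
have [k N_k] := choice k_ex.
pose Pr := (\prod_(q < N0.+1 | prime q && (q != p :> nat)) q ^ k q)%N.
exists (e * Pr)%N.
  rewrite pnatM pe; apply: (big_ind (fun m => p^'.-nat m)) => // [m n pm pn | q /andP [q_pr q_p]].
    by rewrite pnatM pm.
  by rewrite pnatX (pnatE _ q_pr) !inE q_p.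
move=> q q_pr; have [-> | q_neq_p] := eqVneq q p.
  exact: (module_natr (R_subring p_pr) N_mod).
have [N_q _ _ _ _] := NL_normal q_pr.
rewrite natrM mulrAC mulrC; have [lt_N0q | le_qN0] := ltnP N0 q.
  by rewrite N_R //; apply: R_natrM => //; apply: Rez.
apply: (module_prod_natr (R_subring q_pr) N_q (i0 := Ordinal (le_qN0 : (q < N0.+1)%N))).
  by rewrite /= q_pr q_neq_p.
by rewrite mulrC; apply: (moduleM N_q); [apply: Rez | apply: N_k].
Qed.

Lemma bigcap_frac : frac_ideal D (bigcap_primes N).
Proof.
have N_mod q : prime q -> is_module (R q) (N q) by move=> /NL_normal [].
split=> [q q_pr | x y Nx Ny q q_pr | a x Da Nx q q_pr |].
- exact: module0 (N_mod q q_pr).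
- by apply: (moduleD (N_mod q q_pr)); [apply: Nx | apply: Ny].
- by apply: (moduleM (N_mod q q_pr)); [apply: D_sub_R | apply: Nx].
have [N0 N_R] := N_ae.
have k_ex q : exists k, prime q -> L q (q ^ k)%N%:R.
  have [q_pr | _] := boolP (prime q); last by exists 0%N.
  by have [_ _ _ _ [kq L_kq]] := NL_normal q_pr; exists kq.
have [k L_k] := choice k_ex.
pose d := (\prod_(q < N0.+1 | prime q) q ^ k q)%N.
have d_gt0 : (0 < d)%N by apply: prodn_cond_gt0 => q q_pr; rewrite expn_gt0 prime_gt0.
exists d%:R.
  split; first by rewrite natrQX_eq0 -lt0n.
  apply/D_def => q q_pr; rewrite -[d%:R]mulr1; apply: R_natrM => //.
  exact: subring1 (R_subring q_pr).
move=> x Nx; apply/D_def => q q_pr; have [lt_N0q | le_qN0] := ltnP N0 q.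
  by apply: R_natrM => //; rewrite -N_R //; apply: Nx.
have [_ _ NL_R _ _] := NL_normal q_pr.
apply: (module_prod_natr (R_subring q_pr) (subring_module (R_subring q_pr))
          (i0 := Ordinal (le_qN0 : (q < N0.+1)%N))) => //.
by apply/NL_R; rewrite mulrC; apply: ideal_mul_pair; [apply: Nx | apply: L_k].
Qed.

End Gluing.

Lemma bigcap_invertible (N L : nat -> QX -> Prop) :
  (forall p, prime p -> normal_pair p (N p) (L p)) ->
  almost_all_primes (fun p => N p = R p) -> almost_all_primes (fun p => L p = R p) ->
  invertible_ideal D (bigcap_primes N).
Proof.
move=> NL_normal N_ae L_ae.
have LN_normal p : prime p -> normal_pair p (L p) (N p) by move=> /NL_normal /normal_pairC.
have I_frac := bigcap_frac NL_normal N_ae; have I'_frac := bigcap_frac LN_normal L_ae.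
split => //; exists (bigcap_primes L); split => // z; split.
  apply: ideal_mul_ind => [||u v Nu Lv]; [exact: module0 (subring_module D_subring) |
    exact: moduleD (subring_module D_subring) |].
  apply/D_def => q q_pr; have [_ _ NL_R _ _] := NL_normal q q_pr.
  by apply/NL_R; apply: ideal_mul_pair; [apply: Nu | apply: Lv].
move=> Dz; apply: local_global (ideal_mul_module _ (frac_ideal_module I_frac)) _ => p p_pr.
apply/(localize_mul p_pr (frac_ideal_module I_frac) (frac_ideal_module I'_frac)).
rewrite (localize_bigcap NL_normal) // (localize_bigcap LN_normal) //.
by have [_ _ NL_R _ _] := NL_normal p p_pr; apply/NL_R; apply: D_sub_R.
Qed.

Lemma exists_normal_pairs Js : (forall p, prime p -> invertible_ideal (R p) (Js p)) ->
  (exists N : nat, forall p, prime p -> (N < p)%N -> principal_ideal (R p) (Js p)) ->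
  exists N L : nat -> QX -> Prop, [/\ forall p, prime p -> ideal_equiv (Js p) (N p),
    forall p, prime p -> normal_pair p (N p) (L p),
    almost_all_primes (fun p => N p = R p) & almost_all_primes (fun p => L p = R p)].
Proof.
move=> Js_inv [N0 Js_princ].
have NL_ex p : exists NL : (QX -> Prop) * (QX -> Prop), prime p ->
    [/\ ideal_equiv (Js p) NL.1, normal_pair p NL.1 NL.2 & (N0 < p)%N -> NL = (R p, R p)].
  have [p_pr | _] := boolP (prime p); last by exists (R p, R p).
  have [lt_N0p | le_pN0] := ltnP N0 p.
    by exists (R p, R p) => _; split => //; [apply: Js_princ | apply: normal_pair_R].
  have [N [L [Js_N NL]]] := normal_form p_pr (Js_inv p p_pr).
  by exists (N, L) => _; split => //; rewrite ltnNge le_pN0.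
have [NL NL_spec] := choice NL_ex.
exists (fun p => (NL p).1), (fun p => (NL p).2).
split=> [p /NL_spec [] // | p /NL_spec [] // | |];
  by exists N0 => p p_pr lt_N0p; have [_ _ /(_ lt_N0p) ->] := NL_spec p p_pr.
Qed.

Lemma surjective_localize Js : (forall p, prime p -> invertible_ideal (R p) (Js p)) ->
  (exists N : nat, forall p, prime p -> (N < p)%N -> principal_ideal (R p) (Js p)) ->
  exists2 I, invertible_ideal D I & forall p, prime p -> ideal_equiv (localize p I) (Js p).
Proof.
move=> Js_inv Js_princ.
have [N [L [Js_N NL_normal N_ae L_ae]]] := exists_normal_pairs Js_inv Js_princ.
exists (bigcap_primes N); first exact: bigcap_invertible NL_normal N_ae L_ae.
by move=> p p_pr; rewrite (localize_bigcap NL_normal) //; apply/ideal_equiv_sym/Js_N.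
Qed.

Theorem Pic_localization : Pic_iso_direct_sum D (fun p => prime p) R.
Proof.
exists (fun I p => localize p I); split.
- by move=> I I_inv p p_pr; apply: localize_invertible.
- move=> I I_inv; have [a I_a] := exists_content_gen D_subring D_polys I_inv.
  have [N I_aR] := localize_principal_ae I_inv I_a.
  by exists N => p p_pr lt_Np; exists a; [case: I_a | apply: I_aR].
- by move=> I J I_inv J_inv p p_pr; apply: localize_mul_equiv.
- move=> I J I_inv J_inv; split; last exact: equiv_of_local_equiv.
  by move=> IJ p _; apply: localize_equiv.
- exact: surjective_localize.
Qed.

End LocalGlobal.

Unset Implicit Arguments.

Theorem mainTheorem6
  (K : nat -> fieldType)
  (iota : forall p : nat, {rmorphism Zpadic p -> K p})
  (hK : forall p : nat, prime p -> is_alg_closure_Qp (iota p))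
  (E : forall p : nat, K p -> Prop)
  (hE : forall p : nat, prime p -> forall a : K p, E p a -> in_Zp_bar (iota p) a) :
  Pic_iso_direct_sum (in_QX (IntQ_global iota E)) (fun p : nat => prime p)
    (fun p : nat => in_QX (IntQ_at (iota p) (E p))).
Proof.
have iota_inj p : prime p -> injective (iota p) by case/hK.
apply: Pic_localization.
- move=> p p_pr _ _ [f f_int ->] [g g_int ->].
  by exists (f + g); [apply: IntQ_atD => //; apply: iota_inj | rewrite tofracD].
- move=> p p_pr _ _ [f f_int ->] [g g_int ->].
  by exists (f * g); [apply: IntQ_atM => //; apply: iota_inj | rewrite tofracM].
- by move=> p _ _ [g _ ->]; exists g.
- move=> p p_pr g g_loc; exists g => //.
  by apply: IntQ_at_plocal => //; [apply: iota_inj | apply: hE].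
move=> z; split=> [[g g_int ->] p p_pr | z_int]; first by exists g => //; apply: g_int.
have [g _ z_g] := z_int 2%N isT; exists g => // p p_pr.
have [h h_int z_h] := z_int p p_pr.
suff -> : g = h by [].
by apply/eqP; rewrite -tofrac_eq -z_g -z_h eqxx.
Qed.
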